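(* Let $(X_n)$ be the fractionally integrated noise F($d$) with $d\in(0,1/2)$, and let $k\ge1$. Define $a_{0,k}=1$ and $(a_{1,k},\dots,a_{k,k})$ by requiring that $-\sum_{j=1}^{k}a_{j,k}X_{k+1-j}$ is the orthogonal projection in $L^2$ of $X_{k+1}$ onto $\mathrm{span}\{X_1,\dots,X_k\}$. Then for every $j\in\{1,\dots,k\}$, $$a_{j,k}<a_j<0 .$$
   Context: Fractionally integrated noise F($d$), $d\in(0,1/2)$, is the stationary solution of $X_n=(1-B)^{-d}\varepsilon_n$. Here $B$ is the backward shift and $(\varepsilon_n)_{n\in\mathbb Z}$ is a sequence of uncorrelated random variables with mean $0$ and variance $\sigma_\varepsilon^2>0$. Equivalently, $X_n=\sum_{j\ge0}b_j\varepsilon_{n-j}$ with $b_j=\frac{\Gamma(j+d)}{\Gamma(j+1)\Gamma(d)}$, and $\varepsilon_n=\sum_{j\ge0}a_jX_{n-j}$ with $a_0=1$ and $a_j=\frac{\Gamma(j-d)}{\Gamma(j+1)\Gamma(-d)}$ for $j\ge1$. *)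

From Stdlib Require Import Reals Lra Lia.
Open Scope R_scope.

(* MA(infinity) coefficients b_j = Gamma(j+d)/(Gamma(j+1) Gamma(d)),
   written via the Gamma recursion Gamma(x+1) = x Gamma(x):
   b_0 = 1, b_{j+1} = b_j * (j+d)/(j+1). *)
Fixpoint fin_b (d : R) (j : nat) : R :=
  match j with
  | O => 1
  | S j' => fin_b d j' * (INR j' + d) / (INR j' + 1)
  end.

(* AR(infinity) coefficients a_0 = 1, a_j = Gamma(j-d)/(Gamma(j+1) Gamma(-d)):
   a_{j+1} = a_j * (j-d)/(j+1). *)
Fixpoint fin_a (d : R) (j : nat) : R :=
  match j with
  | O => 1
  | S j' => fin_a d j' * (INR j' - d) / (INR j' + 1)
  end.

(* Autocovariance of X_n = sum_j b_j eps_{n-j} with Var(eps) = sigma2: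
   gamma(h) = Cov(X_{n+h}, X_n) = sigma2 * sum_{j>=0} b_j b_{j+h}. *)
Definition is_fin_autocov (d sigma2 : R) (gam : nat -> R) : Prop :=
  forall h : nat, infinite_sum (fun j => sigma2 * fin_b d j * fin_b d (j + h)) (gam h).

Definition absdiff (i j : nat) : nat := ((i - j) + (j - i))%nat.

(* Normal equations characterizing the L^2 orthogonal projection
   -sum_{j=1}^k a_{j,k} X_{k+1-j} of X_{k+1} onto span{X_1..X_k}:
   the residual X_{k+1} + sum_{j=1}^k a_{j,k} X_{k+1-j} is orthogonal to
   each X_{k+1-i}, i = 1..k, i.e.
   gamma(i) + sum_{j=1}^k a_{j,k} gamma(|i-j|) = 0. *)
Definition is_proj_coeffs (gam : nat -> R) (k : nat) (ak : nat -> R) : Prop :=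
  forall i : nat, (1 <= i <= k)%nat ->
    gam i + sum_f_R0 (fun m => ak (S m) * gam (absdiff i (S m))) (k - 1) = 0.

(* The autocovariance of F(d) satisfies (h + 1 - d) gamma(h+1) = (h + d) gamma(h), which follows
   from the recurrence of the b_j by telescoping, the boundary term n b_n^2 tending to 0.  With this
   recurrence one checks directly that a_{j,k} = a_j * prod_{i<j} (k - i) / (k - i - d) solves the
   normal equations.  The Toeplitz matrix (gamma(|p - q|)) is positive definite, because X_n carries
   the innovation eps_n with variance sigma^2 > 0; so this solution is the projection.  Each factor
   (k - i) / (k - i - d) exceeds 1 and a_j < 0, whence a_{j,k} < a_j < 0. *)
From Stdlib Require Import Reals Lra Lia Psatz.
Open Scope R_scope.

Lemma Un_cv_const (c : R) : Un_cv (fun _ => c) c.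
Proof.
  intros eps he; exists O; intros n _.
  unfold Rdist; rewrite Rminus_diag, Rabs_R0; lra.
Qed.

Lemma Un_cv_ext (u v : nat -> R) (l : R) :
  (forall n, u n = v n) -> Un_cv u l -> Un_cv v l.
Proof.
  intros huv hu eps he; destruct (hu eps he) as [N HN].
  exists N; intros n hn; rewrite <- huv; exact (HN n hn).
Qed.

Lemma Un_cv_0_le (u v : nat -> R) :
  (forall n, Rabs (u n) <= v n) -> Un_cv v 0 -> Un_cv u 0.
Proof.
  intros huv hv eps he; destruct (hv eps he) as [N HN].
  exists N; intros n hn; specialize (HN n hn); specialize (huv n).
  unfold Rdist in *; rewrite Rminus_0_r in *.
  pose proof (Rle_abs (v n)); lra.
Qed.

Lemma Un_cv_sum_f_R0 (U : nat -> nat -> R) (l w : nat -> R) (n : nat) :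
  (forall p, (p <= n)%nat -> Un_cv (U p) (l p)) ->
  Un_cv (fun N => sum_f_R0 (fun p => w p * U p N) n) (sum_f_R0 (fun p => w p * l p) n).
Proof.
  induction n as [|n IH]; intros hU; simpl.
  - apply CV_mult; [apply Un_cv_const | apply hU; lia].
  - apply CV_plus; [apply IH; intros; apply hU; lia |].
    apply CV_mult; [apply Un_cv_const | apply hU; lia].
Qed.

Lemma Rmult_sqr_nonpos_eq0 (w x : R) : 0 < w -> w * (x * x) <= 0 -> x = 0.
Proof.
  intros hw h; apply Rsqr_0_uniq; unfold Rsqr.
  pose proof (Rle_0_sqr x); unfold Rsqr in *; apply Rle_antisym; nra.
Qed.

Lemma sum_f_R0_scal_l (x : R) (u : nat -> R) (N : nat) :
  sum_f_R0 (fun i => x * u i) N = x * sum_f_R0 u N.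
Proof. rewrite scal_sum; apply sum_eq; intros; ring. Qed.

Lemma sum_f_R0_swap (F : nat -> nat -> R) (n N : nat) :
  sum_f_R0 (fun t => sum_f_R0 (fun p => F t p) n) N
  = sum_f_R0 (fun p => sum_f_R0 (fun t => F t p) N) n.
Proof.
  induction N as [|N IH]; [reflexivity |].
  rewrite tech5, IH, <- plus_sum; apply sum_eq; reflexivity.
Qed.

Lemma sum_f_R0_zero_before (u : nat -> R) (n : nat) :
  (forall p, (p < n)%nat -> u p = 0) -> sum_f_R0 u n = u n.
Proof.
  destruct n as [|n]; intros hu; [reflexivity |].
  rewrite tech5, sum_eq_R0; [ring |]; intros; apply hu; lia.
Qed.

Lemma sum_f_R0_telescope (u : nat -> R) (n : nat) :
  sum_f_R0 (fun j => u (S j) - u j) n = u (S n) - u 0%nat.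
Proof. induction n as [|n IH]; [reflexivity |]; rewrite tech5, IH; ring. Qed.

Lemma infinite_sum_shift (u : nat -> R) (l : R) (s : nat) :
  infinite_sum u l ->
  infinite_sum (fun t => if (s <=? t)%nat then u (t - s)%nat else 0) l.
Proof.
  intros hu.
  assert (partial : forall r,
    sum_f_R0 (fun t => if (s <=? t)%nat then u (t - s)%nat else 0) (s + r) = sum_f_R0 u r).
  { induction r as [|r IH].
    - rewrite Nat.add_0_r, sum_f_R0_zero_before.
      + rewrite Nat.leb_refl, Nat.sub_diag; reflexivity.
      + intros p hp; destruct (Nat.leb_spec s p); [lia | reflexivity].
    - replace (s + S r)%nat with (S (s + r)) by lia; rewrite !tech5, IH.
      destruct (Nat.leb_spec s (S (s + r))); [| lia].
      replace (S (s + r) - s)%nat with (S r) by lia; reflexivity. }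
  intros eps he; destruct (hu eps he) as [N HN]; exists (N + s)%nat.
  intros n hn; replace n with (s + (n - s))%nat by lia; rewrite partial; apply HN; lia.
Qed.

Lemma sum_tail_ge (u : nat -> R) (m r : nat) :
  (forall n, u (S n) <= u n) ->
  INR r * u (m + r)%nat <= sum_f_R0 u (m + r) - sum_f_R0 u m.
Proof.
  intros hdec; induction r as [|r IH].
  - rewrite Nat.add_0_r; simpl; lra.
  - replace (m + S r)%nat with (S (m + r)) by lia; rewrite tech5, S_INR.
    pose proof (hdec (m + r)%nat); pose proof (pos_INR r); nra.
Qed.

Lemma Un_cv_INR_mult_0 (u : nat -> R) (l : R) :
  (forall n, 0 <= u n) -> (forall n, u (S n) <= u n) -> infinite_sum u l ->
  Un_cv (fun n => INR n * u n) 0.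
Proof.
  intros hpos hdec hu eps he.
  destruct (hu (eps / 4) ltac:(lra)) as [N HN]; exists (2 * N)%nat; intros n hn.
  pose proof (sum_tail_ge u N (n - N) hdec) as tail.
  replace (N + (n - N))%nat with n in tail by lia.
  pose proof (HN n ltac:(lia)) as close_n; pose proof (HN N ltac:(lia)) as close_N.
  unfold Rdist in *; apply Rabs_def2 in close_n; apply Rabs_def2 in close_N.
  assert (hn2 : INR n <= 2 * INR (n - N)).
  { rewrite minus_INR by lia.
    assert (INR (2 * N) <= INR n) by (apply le_INR; lia).
    rewrite mult_INR in *; simpl INR in *; lra. }
  pose proof (hpos n); pose proof (pos_INR n).
  rewrite Rminus_0_r, Rabs_right by nra; nra.
Qed.

Section MACoefficients.

Variable d : R.
Hypothesis hd : 0 < d < 1.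

Lemma fin_b_pos (n : nat) : 0 < fin_b d n.
Proof.
  induction n as [|n IH]; simpl fin_b; [lra |].
  pose proof (pos_INR n); apply Rdiv_lt_0_compat; [apply Rmult_lt_0_compat |]; lra.
Qed.

Lemma fin_b_S_le (n : nat) : fin_b d (S n) <= fin_b d n.
Proof.
  simpl fin_b; pose proof (pos_INR n); pose proof (fin_b_pos n).
  apply (Rmult_le_reg_r (INR n + 1)); [lra |].
  unfold Rdiv; rewrite Rmult_assoc, Rinv_l by lra; nra.
Qed.

Lemma fin_b_le_add (m n : nat) : fin_b d (m + n) <= fin_b d m.
Proof.
  induction n as [|n IH]; [rewrite Nat.add_0_r; lra |].
  rewrite Nat.add_succ_r; pose proof (fin_b_S_le (m + n)); lra.
Qed.

Lemma fin_a_neg (j : nat) : (1 <= j)%nat -> fin_a d j < 0.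
Proof.
  induction j as [|j IH]; intros hj; [lia |].
  simpl fin_a; destruct j as [|j]; [simpl; lra |].
  pose proof (IH ltac:(lia)); pose proof (pos_INR j); rewrite S_INR.
  assert (0 < (INR j + 1 - d) / (INR j + 1 + 1)) by (apply Rdiv_lt_0_compat; lra).
  unfold Rdiv in *; nra.
Qed.

End MACoefficients.

Section AutocovarianceRecurrence.

Variables d s2 : R.

Let partial_autocov (h N : nat) : R := sum_f_R0 (fun j => s2 * fin_b d j * fin_b d (j + h)) N.

Lemma partial_autocov_identity (h N : nat) :
  (INR h + 1 - d) * partial_autocov (S h) N - (INR h + d) * partial_autocov h N
  + s2 * INR (S N) * fin_b d (S N) * fin_b d (S N + h) = 0.
Proof.
  pose proof (pos_INR h); unfold partial_autocov.
  induction N as [|N IH].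
  - simpl; field; lra.
  - rewrite !tech5.
    replace (S N + S h)%nat with (S (S N + h)) by lia.
    replace (S (S N) + h)%nat with (S (S N + h)) by lia.
    change (fin_b d (S (S N + h)))
      with (fin_b d (S N + h) * (INR (S N + h) + d) / (INR (S N + h) + 1)).
    change (fin_b d (S (S N))) with (fin_b d (S N) * (INR (S N) + d) / (INR (S N) + 1)).
    rewrite (S_INR (S N)), plus_INR.
    assert (0 < INR (S N)) by (apply lt_0_INR; lia).
    set (x := INR (S N)) in *.
    set (B1 := fin_b d (S N)) in *; set (B2 := fin_b d (S N + h)) in *.
    assert (s2 * (x + 1) * (B1 * (x + d) / (x + 1)) * (B2 * (x + INR h + d) / (x + INR h + 1))
            = s2 * B1 * B2 * (x + d) * (x + INR h + d) / (x + INR h + 1)) by (field; lra).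
    assert ((INR h + 1 - d) * (s2 * B1 * (B2 * (x + INR h + d) / (x + INR h + 1)))
            - (INR h + d) * (s2 * B1 * B2)
            + s2 * B1 * B2 * (x + d) * (x + INR h + d) / (x + INR h + 1)
            = s2 * x * B1 * B2) by (field; lra).
    lra.
Qed.

Hypothesis hd : 0 < d < 1.
Hypothesis hs : 0 < s2.
Variable gam : nat -> R.
Hypothesis hgam : is_fin_autocov d s2 gam.

Lemma fin_autocov_rec (h : nat) : (INR h + 1 - d) * gam (S h) = (INR h + d) * gam h.
Proof.
  set (U := fun N => (INR h + 1 - d) * partial_autocov (S h) N - (INR h + d) * partial_autocov h N).
  assert (U_cv : Un_cv U ((INR h + 1 - d) * gam (S h) - (INR h + d) * gam h)).
  { apply CV_minus; apply CV_mult; try apply Un_cv_const; apply hgam. }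
  set (v := fun n => INR n * (s2 * fin_b d n * fin_b d (n + 0))).
  assert (v_cv : Un_cv v 0).
  { apply (Un_cv_INR_mult_0 _ (gam 0%nat)); [| | apply hgam]; intros n;
      rewrite ?Nat.add_0_r.
    - pose proof (fin_b_pos d hd n); apply Rmult_le_pos; nra.
    - pose proof (fin_b_S_le d hd n); pose proof (fin_b_pos d hd (S n)).
      apply Rmult_le_compat; nra. }
  assert (U_cv0 : Un_cv U 0).
  { apply (Un_cv_0_le U (fun n => v (n + 1)%nat)); [| exact (CV_shift' v 1 0 v_cv)].
    intros n; unfold U, v; rewrite Nat.add_1_r, Nat.add_0_r.
    pose proof (partial_autocov_identity h n) as boundary.
    pose proof (fin_b_le_add d hd (S n) h); pose proof (fin_b_pos d hd (S n + h)).
    pose proof (fin_b_pos d hd (S n)); pose proof (pos_INR (S n)).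
    assert (0 <= s2 * INR (S n) * fin_b d (S n)) by (apply Rmult_le_pos; nra).
    replace ((INR h + 1 - d) * partial_autocov (S h) n - (INR h + d) * partial_autocov h n)
      with (- (s2 * INR (S n) * fin_b d (S n) * fin_b d (S n + h))) by lra.
    rewrite Rabs_Ropp, Rabs_right by nra; nra. }
  pose proof (UL_sequence U _ _ U_cv U_cv0); lra.
Qed.

Lemma fin_autocov_absdiff_rec (i j : nat) :
  (INR i - INR j + 1 - d) * gam (absdiff (S i) j) = (INR i - INR j + d) * gam (absdiff i j).
Proof.
  destruct (Nat.le_gt_cases j i).
  - replace (absdiff (S i) j) with (S (i - j)) by (unfold absdiff; lia).
    replace (absdiff i j) with (i - j)%nat by (unfold absdiff; lia).
    pose proof (fin_autocov_rec (i - j)); rewrite minus_INR in * by lia; lra.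
  - replace (absdiff (S i) j) with (j - S i)%nat by (unfold absdiff; lia).
    replace (absdiff i j) with (S (j - S i)) by (unfold absdiff; lia).
    pose proof (fin_autocov_rec (j - S i)); rewrite minus_INR, S_INR in * by lia; lra.
Qed.

End AutocovarianceRecurrence.

Lemma sum_sqr_lin_comb (w : R) (c : nat -> R) (v : nat -> nat -> R) (n N : nat) :
  sum_f_R0 (fun t => w * (sum_f_R0 (fun p => c p * v p t) n * sum_f_R0 (fun p => c p * v p t) n)) N
  = sum_f_R0 (fun p => c p * sum_f_R0 (fun q => c q * sum_f_R0 (fun t => w * v p t * v q t) N) n) n.
Proof.
  transitivity (sum_f_R0 (fun t =>
    sum_f_R0 (fun p => c p * sum_f_R0 (fun q => c q * (w * v p t * v q t)) n) n) N).
  - apply sum_eq; intros t _.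
    set (Y := sum_f_R0 (fun p => c p * v p t) n).
    replace (w * (Y * Y)) with (w * Y * Y) by ring.
    unfold Y at 2; rewrite scal_sum; apply sum_eq; intros p _.
    transitivity (c p * (w * v p t * Y)); [ring | f_equal].
    unfold Y; rewrite <- sum_f_R0_scal_l; apply sum_eq; intros; ring.
  - rewrite sum_f_R0_swap; apply sum_eq; intros p _.
    rewrite (sum_f_R0_scal_l (c p) (fun t => sum_f_R0 _ n)), sum_f_R0_swap; f_equal.
    apply sum_eq; intros q _; apply sum_f_R0_scal_l.
Qed.

(* The form is the limit of sum_t w y_t^2 with y_t = sum_p c_p v_p(t); keep its [t = 0] term. *)
Lemma gram_quadratic_form_ge (w : R) (c : nat -> R) (v : nat -> nat -> R) (G : nat -> nat -> R)
    (n : nat) :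
  0 <= w ->
  (forall p q, (p <= n)%nat -> (q <= n)%nat ->
     Un_cv (fun N => sum_f_R0 (fun t => w * v p t * v q t) N) (G p q)) ->
  w * (sum_f_R0 (fun p => c p * v p 0%nat) n * sum_f_R0 (fun p => c p * v p 0%nat) n)
  <= sum_f_R0 (fun p => c p * sum_f_R0 (fun q => c q * G p q) n) n.
Proof.
  intros hw hG.
  set (y := fun t => sum_f_R0 (fun p => c p * v p t) n).
  assert (cv : Un_cv (fun N => sum_f_R0 (fun t => w * (y t * y t)) N)
                     (sum_f_R0 (fun p => c p * sum_f_R0 (fun q => c q * G p q) n) n)).
  { apply (Un_cv_ext _ _ _ (fun N => eq_sym (sum_sqr_lin_comb w c v n N))).
    apply Un_cv_sum_f_R0; intros p hp; apply Un_cv_sum_f_R0; intros q hq; apply hG; auto. }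
  apply (sum_incr _ 0 _ cv); intros t; apply Rmult_le_pos; [lra | apply Rle_0_sqr].
Qed.

Section PositiveDefiniteness.

Variables d s2 : R.
Hypothesis hs : 0 < s2.
Variable gam : nat -> R.
Hypothesis hgam : is_fin_autocov d s2 gam.

(* [innov_coeff n p t] is the coefficient of eps_{n-t} in X_p = sum_j b_j eps_{p-j}. *)
Definition innov_coeff (n p t : nat) : R :=
  if (n <=? p + t)%nat then fin_b d (p + t - n) else 0.

Lemma innov_coeff_gram (n p q : nat) :
  (p <= n)%nat -> (q <= n)%nat ->
  Un_cv (fun N => sum_f_R0 (fun t => s2 * innov_coeff n p t * innov_coeff n q t) N)
        (gam (absdiff p q)).
Proof.
  assert (ordered : forall p q, (p <= q)%nat -> (q <= n)%nat ->
    Un_cv (fun N => sum_f_R0 (fun t => s2 * innov_coeff n p t * innov_coeff n q t) N)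
          (gam (absdiff p q))).
  { clear p q; intros p q hpq hq.
    replace (absdiff p q) with (q - p)%nat by (unfold absdiff; lia).
    apply (Un_cv_ext (fun N => sum_f_R0 (fun t => if (n - p <=? t)%nat
      then s2 * fin_b d (t - (n - p)) * fin_b d (t - (n - p) + (q - p)) else 0) N)).
    - intros N; apply sum_eq; intros t _; unfold innov_coeff.
      destruct (Nat.leb_spec (n - p) t), (Nat.leb_spec n (p + t)), (Nat.leb_spec n (q + t));
        try lia; try ring.
      replace (p + t - n)%nat with (t - (n - p))%nat by lia.
      replace (q + t - n)%nat with (t - (n - p) + (q - p))%nat by lia; reflexivity.
    - exact (infinite_sum_shift _ _ (n - p) (hgam (q - p)%nat)). }
  intros hp hq; destruct (Nat.le_gt_cases p q); [apply ordered; auto |].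
  replace (absdiff p q) with (absdiff q p) by (unfold absdiff; lia).
  apply (Un_cv_ext (fun N => sum_f_R0 (fun t => s2 * innov_coeff n q t * innov_coeff n p t) N)).
  - intros N; apply sum_eq; intros; ring.
  - apply ordered; lia.
Qed.

(* X_n is the only one of X_0, ..., X_n containing eps_n. *)
Lemma autocov_quadratic_form_ge (n : nat) (c : nat -> R) :
  s2 * (c n * c n) <= sum_f_R0 (fun p => c p * sum_f_R0 (fun q => c q * gam (absdiff p q)) n) n.
Proof.
  assert (first_innov : sum_f_R0 (fun p => c p * innov_coeff n p 0%nat) n = c n).
  { rewrite sum_f_R0_zero_before; unfold innov_coeff.
    - rewrite Nat.add_0_r, Nat.leb_refl, Nat.sub_diag; simpl; ring.
    - intros p hp; destruct (Nat.leb_spec n (p + 0)); [lia | ring]. }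
  rewrite <- first_innov.
  apply (gram_quadratic_form_ge s2 c (innov_coeff n)); [lra |].
  intros p q hp hq; apply innov_coeff_gram; auto.
Qed.

Lemma autocov_toeplitz_injective (n : nat) (c : nat -> R) :
  (forall p, (p <= n)%nat -> sum_f_R0 (fun q => c q * gam (absdiff p q)) n = 0) ->
  forall q, (q <= n)%nat -> c q = 0.
Proof.
  revert c; induction n as [|n IH]; intros c hc q hq.
  - pose proof (autocov_quadratic_form_ge 0 c) as form.
    rewrite sum_eq_R0 in form by (intros p hp; rewrite hc by lia; ring).
    replace q with 0%nat by lia; exact (Rmult_sqr_nonpos_eq0 s2 _ hs form).
  - pose proof (autocov_quadratic_form_ge (S n) c) as form.
    rewrite sum_eq_R0 in form by (intros p hp; rewrite hc by lia; ring).
    pose proof (Rmult_sqr_nonpos_eq0 s2 _ hs form) as top.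
    destruct (Nat.eq_dec q (S n)) as [-> | ]; [exact top |].
    apply IH; [| lia]; intros p hp.
    specialize (hc p ltac:(lia)); rewrite tech5, top in hc; lra.
Qed.

Lemma is_proj_coeffs_unique (k : nat) (a a' : nat -> R) :
  is_proj_coeffs gam k a -> is_proj_coeffs gam k a' ->
  forall j, (1 <= j <= k)%nat -> a j = a' j.
Proof.
  intros ha ha' j hj.
  assert (diff0 : forall q, (q <= k - 1)%nat -> a (S q) - a' (S q) = 0).
  { apply autocov_toeplitz_injective; intros p hp.
    pose proof (ha (S p) ltac:(lia)); pose proof (ha' (S p) ltac:(lia)).
    rewrite (sum_eq _ (fun m => a (S m) * gam (absdiff (S p) (S m))
                                - a' (S m) * gam (absdiff (S p) (S m))))
      by (intros m _; change (absdiff (S p) (S m)) with (absdiff p m); ring).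
    rewrite minus_sum; lra. }
  destruct j as [|j]; [lia |]; pose proof (diff0 j ltac:(lia)); lra.
Qed.

End PositiveDefiniteness.

Section ProjectionCoefficients.

Variable d : R.
Hypothesis hd : 0 < d < 1.

Lemma INR_sub_sub_d_neq0 (k j : nat) : INR k - INR j - d <> 0.
Proof.
  destruct (Nat.le_gt_cases k j) as [hkj | hjk].
  - pose proof (le_INR _ _ hkj); lra.
  - assert (INR (S j) <= INR k) by (apply le_INR; lia); rewrite S_INR in *; lra.
Qed.

Fixpoint proj_factor (k j : nat) : R :=
  match j with
  | O => 1
  | S j' => proj_factor k j' * (INR k - INR j') / (INR k - INR j' - d)
  end.

Definition proj_coeff (k j : nat) : R := fin_a d j * proj_factor k j.

Lemma proj_coeff_S (k j : nat) :
  proj_coeff k (S j)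
  = proj_coeff k j * (INR k - INR j) * (INR j - d) / ((INR j + 1) * (INR k - INR j - d)).
Proof.
  unfold proj_coeff; simpl fin_a; simpl proj_factor.
  pose proof (INR_sub_sub_d_neq0 k j); pose proof (pos_INR j); field; lra.
Qed.

Lemma proj_factor_gt1 (k j : nat) : (1 <= j <= k)%nat -> 1 < proj_factor k j.
Proof.
  induction j as [|j IH]; intros hj; [lia |]; simpl proj_factor.
  assert (INR (S j) <= INR k) by (apply le_INR; lia); rewrite S_INR in *.
  assert (step : 1 < (INR k - INR j) / (INR k - INR j - d)).
  { apply (Rmult_lt_reg_r (INR k - INR j - d)); [lra |].
    unfold Rdiv; rewrite Rmult_assoc, Rinv_l by lra; lra. }
  assert (1 <= proj_factor k j).
  { destruct j as [|j]; [simpl; lra | left; apply IH; lia]. }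
  unfold Rdiv in *; nra.
Qed.

Variable s2 : R.
Hypothesis hs : 0 < s2.
Variable gam : nat -> R.
Hypothesis hgam : is_fin_autocov d s2 gam.

Definition proj_residual (k i : nat) : R :=
  sum_f_R0 (fun j => proj_coeff k j * gam (absdiff i j)) k.

Lemma proj_residual_rec (k i : nat) :
  (INR i - INR k) * (INR i + 1 - d) * proj_residual k (S i)
  - INR i * (INR i - INR k + d) * proj_residual k i = 0.
Proof.
  set (H := fun j => INR j * (INR k - INR j + 1 - d) * proj_coeff k j * gam (absdiff (S i) j)).
  (* The recurrences of [proj_coeff] and of [gam] make each summand telescope. *)
  assert (summand : forall j,
    (INR i - INR k) * (INR i + 1 - d) * (proj_coeff k j * gam (absdiff (S i) j))
    - INR i * (INR i - INR k + d) * (proj_coeff k j * gam (absdiff i j)) = H (S j) - H j).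
  { intros j; unfold H; change (absdiff (S i) (S j)) with (absdiff i j).
    rewrite proj_coeff_S, S_INR.
    pose proof (INR_sub_sub_d_neq0 k j); pose proof (pos_INR j).
    pose proof (fin_autocov_absdiff_rec d s2 hd hs gam hgam i j) as rec.
    set (G0 := gam (absdiff i j)) in *; set (G1 := gam (absdiff (S i) j)) in *.
    set (p := proj_coeff k j).
    transitivity (p * (INR i + INR j - INR k)
                    * ((INR i - INR j + 1 - d) * G1 - (INR i - INR j + d) * G0)
                  + (INR k - INR j) * (INR j - d) * p * G0
                  - INR j * (INR k - INR j + 1 - d) * p * G1); [ring |].
    rewrite rec; field; lra. }
  unfold proj_residual; rewrite !scal_sum, <- minus_sum.
  rewrite (sum_eq _ (fun j => H (S j) - H j)) by (intros j _; rewrite <- summand; ring).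
  rewrite sum_f_R0_telescope; unfold H; rewrite proj_coeff_S, Rminus_diag.
  simpl INR; unfold Rdiv; ring.
Qed.

Lemma proj_residual_eq0 (k i : nat) : (1 <= i <= k)%nat -> proj_residual k i = 0.
Proof.
  induction i as [|i IH]; intros hi; [lia |].
  pose proof (proj_residual_rec k i) as rec.
  assert (INR (S i) <= INR k) by (apply le_INR; lia); rewrite S_INR in *; pose proof (pos_INR i).
  assert (nz : (INR i - INR k) * (INR i + 1 - d) <> 0)
    by (apply Rmult_integral_contrapositive; split; lra).
  apply (Rmult_eq_reg_l ((INR i - INR k) * (INR i + 1 - d))); [| exact nz].
  destruct (Nat.eq_dec i 0) as [-> | ]; [simpl INR in *; lra |].
  rewrite IH in rec by lia; lra.
Qed.

Lemma proj_coeff_is_proj (k : nat) : is_proj_coeffs gam k (proj_coeff k).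
Proof.
  intros i hi; rewrite <- (proj_residual_eq0 k i hi); unfold proj_residual.
  rewrite (decomp_sum _ k) by lia; replace (Init.Nat.pred k) with (k - 1)%nat by lia.
  replace (absdiff i 0) with i by (unfold absdiff; lia).
  unfold proj_coeff; simpl; ring.
Qed.

End ProjectionCoefficients.

Theorem mainTheorem6 (d sigma2 : R) (gam : nat -> R) (k : nat) (ak : nat -> R)
  (hd : 0 < d < 1/2) (hs : 0 < sigma2)
  (hgam : is_fin_autocov d sigma2 gam)
  (hk : (1 <= k)%nat)
  (hproj : is_proj_coeffs gam k ak) :
  forall j : nat, (1 <= j <= k)%nat -> ak j < fin_a d j /\ fin_a d j < 0.
Proof.
  assert (hd1 : 0 < d < 1) by lra.
  intros j hj.
  rewrite (is_proj_coeffs_unique d sigma2 hs gam hgam k ak (proj_coeff d k) hproj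
             (proj_coeff_is_proj d hd1 sigma2 hs gam hgam k) j hj).
  pose proof (fin_a_neg d hd1 j ltac:(lia)).
  pose proof (proj_factor_gt1 d hd1 k j hj).
  unfold proj_coeff; split; nra.
Qed.
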